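(* Let $\Lambda$ be an admissible temporal logic over a temporal language $\mathcal L$, let $W_c$ be the set of prime $\mathcal L$-types, ordered by $\Phi\preccurlyeq_c\Psi$ iff $\Phi^+\subseteq\Psi^+$ and $\Psi^-\subseteq\Phi^-$, and let $S_c\subseteq W_c\times W_c$ be the relation $\Phi\mathrel{S_c}\Psi$ iff the pair $(\Phi,\Psi)$ is sensible. Then $S_c$ is a function $W_c\to W_c$ which is monotone (i.e. $\Phi\preccurlyeq_c\Psi$ implies $S_c(\Phi)\preccurlyeq_c S_c(\Psi)$). If moreover $(\circ\varphi\to\circ\psi)\to\circ(\varphi\to\psi)$ is an axiom of $\Lambda$ (for all $\varphi,\psi$), then $S_c$ is also open: whenever $S_c(\Phi)\preccurlyeq_c\Psi$, there is $\Theta\in W_c$ with $\Phi\preccurlyeq_c\Theta$ and $S_c(\Theta)=\Psi$.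
   Context: Formulas are built from $\bot$ and propositional variables using $\wedge,\vee,\to$ and modalities $\circ,\Diamond,\Box,\forall$. A temporal language $\mathcal L_M$ ($M\subseteq\{\Diamond,\Box,\forall\}$) uses $\bot$, variables, $\wedge,\vee,\to,\circ$ and only modalities in $M$. ${\sf ITL}^0_M$ denotes the logic over $\mathcal L_M$ axiomatized by intuitionistic propositional logic, (N1) $\neg\circ\bot$, (N2) $\circ\varphi\wedge\circ\psi\to\circ(\varphi\wedge\psi)$, (N3) $\circ(\varphi\vee\psi)\to\circ\varphi\vee\circ\psi$, (N4) $\circ(\varphi\to\psi)\to(\circ\varphi\to\circ\psi)$, rules modus ponens and from $\varphi$ infer $\circ\varphi$; plus, if $\Diamond\in M$, axiom $\varphi\vee\circ\Diamond\varphi\to\Diamond\varphi$ and rules from $\varphi\to\psi$ infer $\Diamond\varphi\to\Diamond\psi$, from $\circ\varphi\to\varphi$ infer $\Diamond\varphi\to\varphi$; plus, if $\forall\in M$, axioms $\forall\varphi\vee\neg\forall\varphi$, $\forall(\varphi\to\psi)\to(\forall\varphi\to\forall\psi)$, $\forall(\varphi\vee\forall\psi)\to\forall\varphi\vee\forall\psi$, $\forall\varphi\to\varphi$, $\forall\varphi\to\forall\forall\varphi$, $\forall\varphi\leftrightarrow\circ\forall\varphi$ and rule from $\varphi$ infer $\forall\varphi$. An admissible temporal logic over $\mathcal L_M$ is a set of $\mathcal L_M$-formulas containing all substitution instances of the axioms of ${\sf ITL}^0_M$ and closed under its rules. $\Gamma\vdash\Delta$ means there are finite $\Gamma'\subseteq\Gamma$,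 $\Delta'\subseteq\Delta$ with $\bigwedge\Gamma'\to\bigvee\Delta'\in\Lambda$. A prime $\mathcal L$-type is a pair $\Phi=(\Phi^+,\Phi^-)$ of sets of $\mathcal L$-formulas with $\Phi^+\cup\Phi^-=\mathcal L$ and $\Phi^+\not\vdash\Phi^-$. A pair $(\Phi,\Psi)$ is sensible if: $\circ\varphi\in\Phi^+$ implies $\varphi\in\Psi^+$; $\circ\varphi\in\Phi^-$ implies $\varphi\in\Psi^-$; $\Diamond\varphi\in\Phi^+$ implies $\varphi\in\Phi^+$ or $\Diamond\varphi\in\Psi^+$; $\Diamond\varphi\in\Phi^-$ implies $\Diamond\varphi\in\Psi^-$; $\forall\varphi\in\Phi^+$ iff $\forall\varphi\in\Psi^+$; $\forall\varphi\in\Phi^-$ iff $\forall\varphi\in\Psi^-$. *)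

From Stdlib Require Import List.
Import ListNotations.

Inductive form : Type :=
| Bot : form
| Var : nat -> form
| And : form -> form -> form
| Or  : form -> form -> form
| Imp : form -> form -> form
| Next : form -> form
| Dia : form -> form
| Box : form -> form
| All : form -> form.

Definition Neg (p : form) : form := Imp p Bot.
Definition Top : form := Imp Bot Bot.
Definition Iff (p q : form) : form := And (Imp p q) (Imp q p).

Record modalities : Type := Mods { hasDia : bool; hasBox : bool; hasAll : bool }.

Fixpoint inL (M : modalities) (f : form) : Prop :=
  match f with
  | Bot | Var _ => True
  | And a b | Or a b | Imp a b => inL M a /\ inL M b
  | Next a => inL M a
  | Dia a => hasDia M = true /\ inL M a
  | Box a => hasBox M = true /\ inL M a
  | All a => hasAll M = true /\ inL M a
  end.

Definition ipl_axiom (f : form) : Prop :=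
  (exists p q, f = Imp p (Imp q p)) \/
  (exists p q r, f = Imp (Imp p (Imp q r)) (Imp (Imp p q) (Imp p r))) \/
  (exists p q, f = Imp (And p q) p) \/
  (exists p q, f = Imp (And p q) q) \/
  (exists p q, f = Imp p (Imp q (And p q))) \/
  (exists p q, f = Imp p (Or p q)) \/
  (exists p q, f = Imp q (Or p q)) \/
  (exists p q r, f = Imp (Imp p r) (Imp (Imp q r) (Imp (Or p q) r))) \/
  (exists p, f = Imp Bot p).

Definition next_axiom (f : form) : Prop :=
  f = Neg (Next Bot) \/
  (exists p q, f = Imp (And (Next p) (Next q)) (Next (And p q))) \/
  (exists p q, f = Imp (Next (Or p q)) (Or (Next p) (Next q))) \/
  (exists p q, f = Imp (Next (Imp p q)) (Imp (Next p) (Next q))).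

Definition dia_axiom (f : form) : Prop :=
  exists p, f = Imp (Or p (Next (Dia p))) (Dia p).

Definition all_axiom (f : form) : Prop :=
  (exists p, f = Or (All p) (Neg (All p))) \/
  (exists p q, f = Imp (All (Imp p q)) (Imp (All p) (All q))) \/
  (exists p q, f = Imp (All (Or p (All q))) (Or (All p) (All q))) \/
  (exists p, f = Imp (All p) p) \/
  (exists p, f = Imp (All p) (All (All p))) \/
  (exists p, f = Iff (All p) (Next (All p))).

Definition itl0_axiom (M : modalities) (f : form) : Prop :=
  inL M f /\
  (ipl_axiom f \/ next_axiom f \/
   (hasDia M = true /\ dia_axiom f) \/
   (hasAll M = true /\ all_axiom f)).

Definition admissible (M : modalities) (Lam : form -> Prop) : Prop :=
  (forall f, Lam f -> inL M f) /\
  (forall f, itl0_axiom M f -> Lam f) /\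
  (forall p q, Lam p -> Lam (Imp p q) -> Lam q) /\
  (forall p, Lam p -> Lam (Next p)) /\
  (hasDia M = true ->
     (forall p q, Lam (Imp p q) -> Lam (Imp (Dia p) (Dia q))) /\
     (forall p, Lam (Imp (Next p) p) -> Lam (Imp (Dia p) p))) /\
  (hasAll M = true -> forall p, Lam p -> Lam (All p)).

Definition bigAnd (l : list form) : form := fold_right And Top l.
Definition bigOr (l : list form) : form := fold_right Or Bot l.

Definition derives (Lam : form -> Prop) (G D : form -> Prop) : Prop :=
  exists (G' D' : list form),
    (forall x, In x G' -> G x) /\ (forall x, In x D' -> D x) /\
    Lam (Imp (bigAnd G') (bigOr D')).

Record ttype : Type := TT { tpos : form -> Prop; tneg : form -> Prop }.

Definition prime_type (M : modalities) (Lam : form -> Prop) (P : ttype) : Prop :=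
  (forall f, tpos P f -> inL M f) /\ (forall f, tneg P f -> inL M f) /\
  (forall f, inL M f -> tpos P f \/ tneg P f) /\
  ~ derives Lam (tpos P) (tneg P).

Definition tle (P Q : ttype) : Prop :=
  (forall f, tpos P f -> tpos Q f) /\ (forall f, tneg Q f -> tneg P f).

Definition teq (P Q : ttype) : Prop :=
  (forall f, tpos P f <-> tpos Q f) /\ (forall f, tneg P f <-> tneg Q f).

Definition sensible (P Q : ttype) : Prop :=
  (forall f, tpos P (Next f) -> tpos Q f) /\
  (forall f, tneg P (Next f) -> tneg Q f) /\
  (forall f, tpos P (Dia f) -> tpos P f \/ tpos Q (Dia f)) /\
  (forall f, tneg P (Dia f) -> tneg Q (Dia f)) /\
  (forall f, tpos P (All f) <-> tpos Q (All f)) /\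
  (forall f, tneg P (All f) <-> tneg Q (All f)).

(* The successor of a prime type P is read off its next-step formulas,
   S(P) = ({f | ○f ∈ P⁺}, {f | ○f ∈ P⁻}). Necessitation with (N4) and the axioms
   (N1), (N3) make S(P) prime; the ◇-axiom with the ◇-induction rule, and
   ∀f ↔ ○∀f, make (P, S(P)) sensible. The ○-clauses of sensibility together with
   primality force every sensible successor of P to be S(P), which is visibly
   monotone in P.
   For openness, given S(P) ≼ Q, extend the pair (P⁺ ∪ ○Q⁺, ○Q⁻) to a prime type
   Θ by a Lindenbaum construction. The pair is consistent: P⁺, ○g ⊢ ○d with
   g ∈ Q⁺ and d ∈ Q⁻ would put ○g → ○d, hence ○(g → d) by the extra axiom, into
   P⁺, so g → d ∈ Q⁺ and then d ∈ Q⁺. *)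

From Stdlib Require Import List Classical ClassicalEpsilon Lia Cantor.
Import ListNotations.

Lemma Forall_snoc {X} (P : X -> Prop) l a : Forall P l -> P a -> Forall P (l ++ [a]).
Proof. intros. apply Forall_app. auto. Qed.

Lemma Forall_or_map_split {X Y} (A : X -> Prop) (B : Y -> Prop) (f : Y -> X) l :
  Forall (fun x => A x \/ exists y, x = f y /\ B y) l ->
  exists l1 l2, Forall A l1 /\ Forall B l2 /\ incl l (l1 ++ map f l2).
Proof.
  induction 1 as [|x l [Hx|(y & -> & Hy)] _ (l1 & l2 & H1 & H2 & Hincl)].
  - exists [], []. repeat split; auto. intros x [].
  - exists (x :: l1), l2. repeat split; auto.
    intros z [<-|Hz]; [now left|right; auto].
  - exists l1, (y :: l2). repeat split; auto.
    intros z [<-|Hz]; apply in_or_app; [right; now left|].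
    apply Hincl, in_app_or in Hz as [|]; [now left|right; now right].
Qed.

Lemma Forall_map_split {X Y} (B : Y -> Prop) (f : Y -> X) l :
  Forall (fun x => exists y, x = f y /\ B y) l -> exists l', Forall B l' /\ l = map f l'.
Proof.
  induction 1 as [|x l (y & -> & Hy) _ (l' & H' & ->)].
  - now exists [].
  - exists (y :: l'). split; [now constructor|reflexivity].
Qed.

Lemma Forall_eventually {X} (P : nat -> X -> Prop) l :
  (forall n m x, n <= m -> P n x -> P m x) ->
  Forall (fun x => exists n, P n x) l -> exists N, Forall (P N) l.
Proof.
  intros Hmono. induction 1 as [|x l [k Hk] _ [N HN]].
  - now exists 0.
  - exists (Nat.max k N). constructor.
    + apply (Hmono k); [lia|exact Hk].
    + eapply Forall_impl; [|exact HN]. intros y. apply Hmono. lia.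
Qed.

Fixpoint imps (l : list form) (p : form) : form :=
  match l with [] => p | x :: l' => Imp x (imps l' p) end.

Lemma imps_snoc l a p : imps (l ++ [a]) p = imps l (Imp a p).
Proof. induction l; simpl; congruence. Qed.

Lemma inL_imps M l p : inL M (imps l p) <-> Forall (inL M) l /\ inL M p.
Proof.
  induction l as [|x l IH]; simpl.
  - intuition.
  - rewrite IH, Forall_cons_iff. tauto.
Qed.

Lemma inL_bigAnd M l : Forall (inL M) l -> inL M (bigAnd l).
Proof. induction 1; simpl; tauto. Qed.

Lemma inL_bigOr M l : Forall (inL M) l -> inL M (bigOr l).
Proof. induction 1; simpl; tauto. Qed.

Definition form_eq_dec : forall x y : form, {x = y} + {x <> y}.
Proof. do 2 decide equality. Defined.

Lemma incl_cons_remove (p : form) l : incl l (p :: remove form_eq_dec p l).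
Proof.
  intros x Hx. destruct (form_eq_dec x p) as [->|Hne]; [now left|].
  right. now apply in_in_remove.
Qed.

Definition code (m n : nat) : nat := Cantor.to_nat (m, n).

Lemma code_inj m n m' n' : code m n = code m' n' -> m = m' /\ n = n'.
Proof.
  intros H. apply (f_equal Cantor.of_nat) in H. unfold code in H.
  rewrite !Cantor.cancel_of_to in H. now injection H.
Qed.

Fixpoint enc (f : form) : nat :=
  match f with
  | Bot => code 0 0
  | Var n => code 1 n
  | And a b => code 2 (code (enc a) (enc b))
  | Or a b => code 3 (code (enc a) (enc b))
  | Imp a b => code 4 (code (enc a) (enc b))
  | Next a => code 5 (enc a)
  | Dia a => code 6 (enc a)
  | Box a => code 7 (enc a)
  | All a => code 8 (enc a)
  end.

Lemma enc_inj f g : enc f = enc g -> f = g.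
Proof.
  revert g; induction f; intros [] H; try reflexivity;
    apply code_inj in H as [Htag H]; try discriminate Htag; f_equal; auto;
    apply code_inj in H as [H1 H2]; auto.
Qed.

Definition enum (n : nat) : form := epsilon (inhabits Bot) (fun f => enc f = n).

Lemma enum_enc f : enum (enc f) = f.
Proof. apply enc_inj, (epsilon_spec (inhabits Bot) (fun g => enc g = enc f)). now exists f. Qed.

Definition add_form (A : form -> Prop) (p : form) : form -> Prop := fun x => x = p \/ A x.

Lemma derives_mono Lam (A B A' B' : form -> Prop) :
  (forall x, A x -> A' x) -> (forall x, B x -> B' x) -> derives Lam A B -> derives Lam A' B'.
Proof. intros HA HB (G & D & HG & HD & H). exists G, D; auto. Qed.

Lemma teq_sym P Q : teq P Q -> teq Q P.
Proof. intros [Hpos Hneg]. split; intros f; symmetry; auto. Qed.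

Lemma tle_of_teq P Q : teq P Q -> tle P Q.
Proof. intros [Hpos Hneg]. split; intros f; apply Hpos || apply Hneg. Qed.

Lemma tle_trans P Q R : tle P Q -> tle Q R -> tle P R.
Proof. intros [H1 H2] [H3 H4]. split; auto. Qed.

Definition successor (P : ttype) : ttype :=
  TT (fun f => tpos P (Next f)) (fun f => tneg P (Next f)).

Lemma successor_mono P Q : tle P Q -> tle (successor P) (successor Q).
Proof. intros [Hpos Hneg]. split; intros f; simpl; auto. Qed.

(** * Hilbert calculus and natural deduction *)

Section Admissible.

Variables (M : modalities) (Lam : form -> Prop).
Hypothesis HA : admissible M Lam.

Lemma Lam_inL f : Lam f -> inL M f.
Proof. apply HA. Qed.

Lemma Lam_mp p q : Lam p -> Lam (Imp p q) -> Lam q.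
Proof. apply HA. Qed.

Lemma Lam_nec p : Lam p -> Lam (Next p).
Proof. apply HA. Qed.

Lemma Lam_axiom f : itl0_axiom M f -> Lam f.
Proof. apply HA. Qed.

Lemma Lam_ipl f : inL M f -> ipl_axiom f -> Lam f.
Proof. intros Hf Hax. apply Lam_axiom. split; tauto. Qed.

Lemma Lam_next_axiom f : inL M f -> next_axiom f -> Lam f.
Proof. intros Hf Hax. apply Lam_axiom. split; tauto. Qed.

Lemma Lam_K a b : inL M a -> inL M b -> Lam (Imp a (Imp b a)).
Proof. intros. apply Lam_ipl; [simpl; tauto|]. left; eauto. Qed.

Lemma Lam_S a b c : inL M a -> inL M b -> inL M c ->
  Lam (Imp (Imp a (Imp b c)) (Imp (Imp a b) (Imp a c))).
Proof. intros. apply Lam_ipl; [simpl; tauto|]. right; left; eauto. Qed.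

Lemma Lam_weaken x p : inL M x -> Lam p -> Lam (Imp x p).
Proof. intros Hx Hp. apply (Lam_mp p); [|apply Lam_K]; auto using Lam_inL. Qed.

Lemma Lam_mp_under x a b : Lam (Imp x (Imp a b)) -> Lam (Imp x a) -> Lam (Imp x b).
Proof.
  intros H1 H2. pose proof (Lam_inL _ H1) as W; simpl in W.
  apply (Lam_mp _ _ H2), (Lam_mp _ _ H1), Lam_S; tauto.
Qed.

Lemma Lam_I a : inL M a -> Lam (Imp a a).
Proof.
  intros Ha. apply (Lam_mp_under _ (Imp a a)); apply Lam_K; simpl; auto.
Qed.

Lemma Lam_comp a b c : Lam (Imp a b) -> Lam (Imp b c) -> Lam (Imp a c).
Proof.
  intros H1 H2. pose proof (Lam_inL _ H1) as W; simpl in W.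
  apply (Lam_mp_under _ b); [apply Lam_weaken|]; tauto.
Qed.

Lemma imps_S l a b : Forall (inL M) l -> inL M a -> inL M b ->
  Lam (Imp (imps l (Imp a b)) (Imp (imps l a) (imps l b))).
Proof.
  intros Hl Ha Hb. induction Hl as [|x l Hx Hl IH]; simpl.
  - apply Lam_I. simpl; tauto.
  - pose proof (Lam_inL _ IH) as W; simpl in W.
    apply (Lam_comp _ (Imp x (Imp (imps l a) (imps l b))));
      [apply (Lam_mp _ _ (Lam_weaken x _ Hx IH))|]; apply Lam_S; simpl; tauto.
Qed.

Lemma imps_mp l a b : Lam (imps l (Imp a b)) -> Lam (imps l a) -> Lam (imps l b).
Proof.
  intros H1 H2. pose proof (Lam_inL _ H1) as W. apply inL_imps in W as [Wl [Wa Wb]].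
  apply (Lam_mp _ _ H2), (Lam_mp _ _ H1), imps_S; auto.
Qed.

Lemma imps_weaken l p : Forall (inL M) l -> Lam p -> Lam (imps l p).
Proof. induction 1; simpl; auto using Lam_weaken. Qed.

Lemma imps_self l x : Forall (inL M) l -> inL M x -> Lam (Imp x (imps l x)).
Proof.
  induction 1 as [|y l Hy Hl IH]; simpl; intros Hx.
  - now apply Lam_I.
  - apply (Lam_comp _ _ _ (IH Hx)), Lam_K; auto. apply inL_imps; auto.
Qed.

Lemma imps_hyp l a : Forall (inL M) l -> In a l -> Lam (imps l a).
Proof.
  induction 1 as [|x l Hx Hl IH]; simpl; [tauto|].
  intros [<-|Ha]; [apply imps_self|apply Lam_weaken]; auto.
Qed.

(* Natural deduction with the theorems of [Lam] as axioms, for reasoning from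
   hypotheses; the [inL M] side conditions keep derivable formulas inside the
   language, as [nd_sound] requires. *)
Inductive ND : list form -> form -> Prop :=
| nd_ax G p : Lam p -> ND G p
| nd_hyp G p : In p G -> ND G p
| nd_impI G a b : inL M a -> ND (G ++ [a]) b -> ND G (Imp a b)
| nd_impE G a b : ND G (Imp a b) -> ND G a -> ND G b
| nd_andI G a b : ND G a -> ND G b -> ND G (And a b)
| nd_andE1 G a b : ND G (And a b) -> ND G a
| nd_andE2 G a b : ND G (And a b) -> ND G b
| nd_orI1 G a b : inL M b -> ND G a -> ND G (Or a b)
| nd_orI2 G a b : inL M a -> ND G b -> ND G (Or a b)
| nd_orE G a b c : ND G (Or a b) -> ND (G ++ [a]) c -> ND (G ++ [b]) c -> ND G c
| nd_botE G p : inL M p -> ND G Bot -> ND G p.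

Lemma nd_inL G p : ND G p -> Forall (inL M) G -> inL M p.
Proof.
  induction 1 as [G p H|G p H|G a b Ha _ IH|G a b _ IH _ _|G a b _ IH1 _ IH2
    |G a b _ IH|G a b _ IH|G a b Hb _ IH|G a b Ha _ IH|G a b c _ IH1 _ IH2 _ _|G p Hp _ _];
    intros Hl; simpl in *.
  - now apply Lam_inL.
  - now apply (proj1 (Forall_forall _ _) Hl).
  - split; [|apply IH, Forall_snoc]; auto.
  - now apply IH.
  - auto.
  - now apply IH.
  - now apply IH.
  - auto.
  - auto.
  - apply IH2, Forall_snoc; [|apply IH1]; tauto.
  - exact Hp.
Qed.

Lemma imps_ipl G f : Forall (inL M) G -> inL M f -> ipl_axiom f -> Lam (imps G f).
Proof. intros; apply imps_weaken, Lam_ipl; auto. Qed.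

Lemma nd_sound G p : ND G p -> Forall (inL M) G -> Lam (imps G p).
Proof.
  induction 1 as [G p H|G p H|G a b Ha H IH|G a b H1 IH1 H2 IH2|G a b H1 IH1 H2 IH2
    |G a b H IH|G a b H IH|G a b Hb H IH|G a b Ha H IH|G a b c H1 IH1 H2 IH2 H3 IH3|G p Hp H IH];
    intros Hl.
  all: try pose proof (nd_inL _ _ H Hl) as W; try pose proof (nd_inL _ _ H1 Hl) as W1;
    try pose proof (nd_inL _ _ H2 Hl) as W2; simpl in *.
  - now apply imps_weaken.
  - now apply imps_hyp.
  - rewrite <- imps_snoc. now apply IH, Forall_snoc.
  - apply (imps_mp _ a); auto.
  - apply (imps_mp _ b); [apply (imps_mp _ a)|]; auto.
    apply imps_ipl; [auto|simpl; tauto|]. do 4 right; left; eauto.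
  - apply (imps_mp _ (And a b)); auto.
    apply imps_ipl; [auto|simpl; tauto|]. do 2 right; left; eauto.
  - apply (imps_mp _ (And a b)); auto.
    apply imps_ipl; [auto|simpl; tauto|]. do 3 right; left; eauto.
  - apply (imps_mp _ a); auto.
    apply imps_ipl; [auto|simpl; tauto|]. do 5 right; left; eauto.
  - apply (imps_mp _ b); auto.
    apply imps_ipl; [auto|simpl; tauto|]. do 6 right; left; eauto.
  - assert (Ha : Forall (inL M) (G ++ [a])) by (apply Forall_snoc; tauto).
    assert (Hb : Forall (inL M) (G ++ [b])) by (apply Forall_snoc; tauto).
    pose proof (nd_inL _ _ H2 Ha) as Wc.
    specialize (IH2 Ha). specialize (IH3 Hb). rewrite imps_snoc in IH2, IH3.
    apply (imps_mp _ (Or a b)); [apply (imps_mp _ (Imp b c)); [apply (imps_mp _ (Imp a c))|]|];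
      auto.
    apply imps_ipl; [auto|simpl; tauto|]. do 7 right; left; eauto.
  - apply (imps_mp _ Bot); auto.
    apply imps_ipl; [auto|simpl; tauto|]. do 8 right; eauto.
Qed.

Lemma nd_weaken G p : ND G p -> forall G', incl G G' -> ND G' p.
Proof.
  induction 1; intros G' HG.
  all: try solve [econstructor; eauto using incl_app_app, incl_refl].
Qed.

Lemma nd_hyp_snoc G a : ND (G ++ [a]) a.
Proof. apply nd_hyp, in_or_app. simpl; auto. Qed.

Lemma nd_weaken_snoc G a p : ND G p -> ND (G ++ [a]) p.
Proof. intros H. apply (nd_weaken _ _ H), incl_appl, incl_refl. Qed.

Lemma nd_subst G p : ND G p -> forall D, Forall (ND D) G -> ND D p.
Proof.
  assert (Hsnoc : forall G' D a, Forall (ND D) G' -> Forall (ND (D ++ [a])) (G' ++ [a])).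
  { intros G' D a HG. apply Forall_snoc; [|apply nd_hyp_snoc].
    eapply Forall_impl; [|exact HG]. apply nd_weaken_snoc. }
  induction 1; intros D HD.
  all: try solve [econstructor; eauto].
  now apply (proj1 (Forall_forall _ _) HD).
Qed.

Lemma nd_mp G a b : Lam (Imp a b) -> ND G a -> ND G b.
Proof. intros H1 H2. exact (nd_impE _ _ _ (nd_ax _ _ H1) H2). Qed.

Lemma Lam_of_nd a b : inL M a -> ND [a] b -> Lam (Imp a b).
Proof. intros Ha H. apply (nd_sound _ _ H). auto. Qed.

Lemma nd_bigOr_elim G D c : inL M c -> Forall (fun x => ND (G ++ [x]) c) D ->
  ND G (bigOr D) -> ND G c.
Proof.
  intros Hc HD. revert G HD. induction D as [|x D IH]; simpl; intros G HD H.
  - now apply nd_botE.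
  - inversion HD as [|? ? Hx HD']; subst.
    apply (nd_orE _ _ _ _ H Hx), IH; [|apply nd_hyp_snoc].
    eapply Forall_impl; [|exact HD']. intros y Hy.
    apply (nd_weaken _ _ Hy). intros z. rewrite !in_app_iff. simpl. tauto.
Qed.

Lemma nd_bigOr_intro G D x : Forall (inL M) D -> In x D -> ND G x -> ND G (bigOr D).
Proof.
  induction 1 as [|y D Hy HD IH]; simpl; [tauto|].
  intros [<-|Hx] H; [apply nd_orI1|apply nd_orI2]; auto using inL_bigOr.
Qed.

Lemma nd_bigOr_incl G D D' : Forall (inL M) D' -> incl D D' ->
  ND G (bigOr D) -> ND G (bigOr D').
Proof.
  intros HD' Hincl. apply nd_bigOr_elim; [now apply inL_bigOr|].
  apply Forall_forall. intros x Hx. apply (nd_bigOr_intro _ _ x); auto. apply nd_hyp_snoc.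
Qed.

Lemma nd_bigAnd_elim G l x : In x l -> ND G (bigAnd l) -> ND G x.
Proof.
  induction l as [|y l IH]; simpl; [tauto|].
  intros [<-|Hx] H; [apply (nd_andE1 _ _ _ H)|apply IH, (nd_andE2 _ _ _ H)]; auto.
Qed.

Lemma nd_bigAnd_intro G l : Forall (ND G) l -> ND G (bigAnd l).
Proof.
  induction 1; simpl; [|now apply nd_andI].
  apply nd_impI; [exact I|apply nd_hyp_snoc].
Qed.

Lemma derives_of_nd (A B : form -> Prop) G D : Forall (inL M) G ->
  Forall A G -> Forall B D -> ND G (bigOr D) -> derives Lam A B.
Proof.
  intros Hw HG HD H. exists G, D. rewrite <- !Forall_forall. repeat split; auto.
  apply Lam_of_nd; [now apply inL_bigAnd|].
  apply (nd_subst _ _ H), Forall_forall. intros x Hx.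
  apply (nd_bigAnd_elim _ _ _ Hx), nd_hyp. now left.
Qed.

Lemma nd_of_derives (A B : form -> Prop) : derives Lam A B ->
  exists G D, Forall A G /\ Forall B D /\ ND G (bigOr D).
Proof.
  intros (G & D & HG & HD & H). exists G, D. rewrite !Forall_forall. repeat split; auto.
  apply (nd_mp _ _ _ H), nd_bigAnd_intro, Forall_forall. intros. now apply nd_hyp.
Qed.

(** * Prime types *)

Section PrimeType.

Variable P : ttype.
Hypothesis HP : prime_type M Lam P.

Lemma prime_pos_inL f : tpos P f -> inL M f.
Proof. apply HP. Qed.

Lemma prime_neg_inL f : tneg P f -> inL M f.
Proof. apply HP. Qed.

Lemma prime_consistent G D : Forall (tpos P) G -> Forall (tneg P) D -> ~ ND G (bigOr D).
Proof.
  intros HG HD H. apply HP, (derives_of_nd _ _ G D); auto.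
  eapply Forall_impl; [|exact HG]. exact prime_pos_inL.
Qed.

Lemma prime_disjoint f : tpos P f -> tneg P f -> False.
Proof.
  intros Hpos Hneg. apply (prime_consistent [f] [f]); auto.
  apply nd_orI1; [exact I|]. now apply nd_hyp; left.
Qed.

Lemma prime_neg_iff f : inL M f -> (tneg P f <-> ~ tpos P f).
Proof.
  intros Hf. split; [eauto using prime_disjoint|].
  destruct HP as (_ & _ & Hcover & _). destruct (Hcover f Hf); tauto.
Qed.

Lemma prime_closed G f : Forall (tpos P) G -> ND G f -> tpos P f.
Proof.
  intros HG H. apply NNPP. intros Hf.
  assert (Wf : inL M f).
  { apply (nd_inL _ _ H). eapply Forall_impl; [|exact HG]. exact prime_pos_inL. }
  apply (prime_consistent G [f]); auto.
  - constructor; auto. now apply prime_neg_iff.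
  - now apply nd_orI1.
Qed.

Lemma prime_imp a b : Lam (Imp a b) -> tpos P a -> tpos P b.
Proof. intros H Ha. apply (prime_closed [a]); auto. apply (nd_mp _ _ _ H), nd_hyp. now left. Qed.

Lemma prime_or a b : tpos P (Or a b) -> tpos P a \/ tpos P b.
Proof.
  intros H. pose proof (prime_pos_inL _ H) as [Wa Wb].
  apply NNPP. intros Hab. apply (prime_consistent [Or a b] [a; b]); auto.
  - repeat constructor; apply prime_neg_iff; tauto.
  - apply (nd_orE _ a b); [apply nd_hyp; now left| |].
    + apply (nd_bigOr_intro _ [a; b] a); [repeat constructor; tauto|now left|apply nd_hyp_snoc].
    + apply (nd_bigOr_intro _ [a; b] b); [repeat constructor; tauto|now right; left|].
      apply nd_hyp_snoc.
Qed.

Lemma prime_iff a b : Lam (Iff a b) -> (tpos P a <-> tpos P b).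
Proof.
  intros H. split; intros Hpos.
  - apply (prime_closed [a]); auto.
    apply (nd_impE _ a); [apply (nd_andE1 _ _ (Imp b a)), nd_ax, H|now apply nd_hyp; left].
  - apply (prime_closed [b]); auto.
    apply (nd_impE _ b); [apply (nd_andE2 _ (Imp a b)), nd_ax, H|now apply nd_hyp; left].
Qed.

End PrimeType.

(** * The successor of a prime type *)

Lemma Lam_N1 : Lam (Imp (Next Bot) Bot).
Proof. apply Lam_next_axiom; [simpl; tauto|]. now left. Qed.

Lemma Lam_N3 a b : inL M a -> inL M b -> Lam (Imp (Next (Or a b)) (Or (Next a) (Next b))).
Proof. intros. apply Lam_next_axiom; [simpl; tauto|]. right; right; left; eauto. Qed.

Lemma Lam_N4 a b : inL M a -> inL M b ->
  Lam (Imp (Next (Imp a b)) (Imp (Next a) (Next b))).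
Proof. intros. apply Lam_next_axiom; [simpl; tauto|]. right; right; right; eauto. Qed.

Lemma Lam_next_mono a b : Lam (Imp a b) -> Lam (Imp (Next a) (Next b)).
Proof.
  intros H. pose proof (Lam_inL _ H) as [Wa Wb].
  apply (Lam_mp _ _ (Lam_nec _ H)), Lam_N4; auto.
Qed.

Lemma nd_next_imps D G p : Forall (inL M) G -> inL M p ->
  ND D (Next (imps G p)) -> ND (D ++ map Next G) (Next p).
Proof.
  intros HG Hp. revert D. induction HG as [|a G Ha HG IH]; simpl; intros D H.
  - now rewrite app_nil_r.
  - replace (D ++ Next a :: map Next G) with ((D ++ [Next a]) ++ map Next G)
      by now rewrite <- app_assoc.
    apply IH, (nd_impE _ (Next a)); [|apply nd_hyp_snoc].
    apply nd_weaken_snoc, (nd_mp _ _ _ (Lam_N4 _ _ Ha (proj2 (inL_imps _ _ _) (conj HG Hp)))), H.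
Qed.

Lemma nd_next G p : Forall (inL M) G -> ND G p -> ND (map Next G) (Next p).
Proof.
  intros HG H. apply (nd_next_imps []); [exact HG|exact (nd_inL _ _ H HG)|].
  apply nd_ax, Lam_nec, nd_sound; assumption.
Qed.

Lemma nd_next_bigOr G D : Forall (inL M) D ->
  ND G (Next (bigOr D)) -> ND G (bigOr (map Next D)).
Proof.
  intros HD. revert G. induction HD as [|x D Hx HD IH]; simpl; intros G H.
  - exact (nd_mp _ _ _ Lam_N1 H).
  - apply (nd_orE _ (Next x) (Next (bigOr D))).
    + exact (nd_mp _ _ _ (Lam_N3 _ _ Hx (inL_bigOr _ _ HD)) H).
    + apply nd_orI1; [apply inL_bigOr, Forall_map, HD|apply nd_hyp_snoc].
    + apply nd_orI2; [exact Hx|]. apply IH, nd_hyp_snoc.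
Qed.

Lemma Lam_dia_axiom f : hasDia M = true -> inL M f ->
  Lam (Imp (Or f (Next (Dia f))) (Dia f)).
Proof.
  intros Hd Hf. apply Lam_axiom. split; [simpl; tauto|].
  right; right; left. split; [exact Hd|]. now exists f.
Qed.

Lemma Lam_dia_unfold f : hasDia M = true -> inL M f ->
  Lam (Imp (Dia f) (Or f (Next (Dia f)))).
Proof.
  intros Hd Hf.
  destruct HA as (_ & _ & _ & _ & Hrules & _). destruct (Hrules Hd) as [Hmono Hind].
  pose proof (Lam_dia_axiom f Hd Hf) as Ax.
  set (X := Or f (Next (Dia f))).
  assert (WX : inL M X) by (simpl; tauto).
  assert (Hbase : Lam (Imp f (Dia f))).
  { apply Lam_of_nd; auto. apply (nd_mp _ _ _ Ax), nd_orI1; [simpl; tauto|]. now apply nd_hyp; left. }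
  assert (Hstep : Lam (Imp (Next (Dia f)) (Dia f))).
  { apply Lam_of_nd; [simpl; tauto|]. apply (nd_mp _ _ _ Ax), nd_orI2; [exact Hf|].
    now apply nd_hyp; left. }
  (* [X] is closed under [Next], so the induction rule gives [Dia X -> X]. *)
  assert (HX : Lam (Imp (Next X) X)).
  { apply Lam_of_nd; [exact WX|].
    apply (nd_orE _ (Next f) (Next (Next (Dia f)))).
    - apply (nd_mp _ _ _ (Lam_N3 f (Next (Dia f)) Hf (proj2 WX))). now apply nd_hyp; left.
    - apply nd_orI2; [exact Hf|]. apply (nd_mp _ _ _ (Lam_next_mono _ _ Hbase)), nd_hyp_snoc.
    - apply nd_orI2; [exact Hf|]. apply (nd_mp _ _ _ (Lam_next_mono _ _ Hstep)), nd_hyp_snoc. }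
  apply (Lam_comp _ (Dia X)); [apply Hmono|now apply Hind].
  apply Lam_of_nd; [exact Hf|]. apply nd_orI1; [apply WX|]. now apply nd_hyp; left.
Qed.

Lemma Lam_all_next f : hasAll M = true -> inL M f -> Lam (Iff (All f) (Next (All f))).
Proof.
  intros Ha Hf. apply Lam_axiom. split; [simpl; tauto|].
  right; right; right. split; [exact Ha|]. do 5 right. now exists f.
Qed.

Lemma sensible_of_next_iff P Q : prime_type M Lam P -> prime_type M Lam Q ->
  (forall f, inL M f -> (tpos P (Next f) <-> tpos Q f)) -> sensible P Q.
Proof.
  intros HP HQ Hpos.
  assert (Hneg : forall f, inL M f -> (tneg P (Next f) <-> tneg Q f)).
  { intros f Hf. rewrite (prime_neg_iff P HP (Next f) Hf), (prime_neg_iff Q HQ f Hf), Hpos; tauto. }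
  assert (Hall : forall f, (tpos P (All f) <-> tpos Q (All f)) /\ (tneg P (All f) <-> tneg Q (All f))).
  { intros f. destruct (classic (inL M (All f))) as [Wf|Wf].
    - assert (Hfix : tpos P (All f) <-> tpos Q (All f)).
      { rewrite (prime_iff P HP _ _ (Lam_all_next f (proj1 Wf) (proj2 Wf))). now apply Hpos. }
      split; [exact Hfix|].
      rewrite (prime_neg_iff P HP _ Wf), (prime_neg_iff Q HQ _ Wf), Hfix. tauto.
    - pose proof (prime_pos_inL P HP (All f)). pose proof (prime_neg_inL P HP (All f)).
      pose proof (prime_pos_inL Q HQ (All f)). pose proof (prime_neg_inL Q HQ (All f)).
      tauto. }
  split; [|split; [|split; [|split; [|split]]]].
  - intros f H. apply Hpos; [exact (prime_pos_inL P HP _ H)|exact H].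
  - intros f H. apply Hneg; [exact (prime_neg_inL P HP _ H)|exact H].
  - intros f H. pose proof (prime_pos_inL P HP _ H) as [Hd Wf].
    apply (prime_imp P HP _ _ (Lam_dia_unfold f Hd Wf)), (prime_or P HP) in H as [H|H]; auto.
    right. apply Hpos; [simpl; tauto|exact H].
  - intros f H. pose proof (prime_neg_inL P HP _ H) as [Hd Wf].
    apply Hneg; [simpl; tauto|]. apply (prime_neg_iff P HP); [simpl; tauto|].
    apply (prime_neg_iff P HP) in H; [|simpl; tauto]. contradict H.
    apply (prime_imp P HP _ _ (Lam_dia_axiom f Hd Wf)), (prime_closed P HP [Next (Dia f)]); auto.
    apply nd_orI2; [exact Wf|]. now apply nd_hyp; left.
  - intros f. apply Hall.
  - intros f. apply Hall.
Qed.

Lemma successor_prime P : prime_type M Lam P -> prime_type M Lam (successor P).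
Proof.
  intros HP. repeat split; simpl.
  - intros f H. exact (prime_pos_inL P HP _ H).
  - intros f H. exact (prime_neg_inL P HP _ H).
  - intros f Hf. now apply HP.
  - intros Hder. destruct (nd_of_derives _ _ Hder) as (G & D & HG & HD & H).
    assert (WG : Forall (inL M) G)
      by (eapply Forall_impl; [|exact HG]; intros f Hf; exact (prime_pos_inL P HP _ Hf)).
    assert (WD : Forall (inL M) D)
      by (eapply Forall_impl; [|exact HD]; intros f Hf; exact (prime_neg_inL P HP _ Hf)).
    apply (prime_consistent P HP (map Next G) (map Next D)); try now apply Forall_map.
    apply nd_next_bigOr, nd_next; assumption.
Qed.

Lemma successor_sensible P : prime_type M Lam P -> sensible P (successor P).
Proof. intros HP. apply sensible_of_next_iff; auto using successor_prime. simpl; tauto. Qed.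

Lemma sensible_successor_eq P Q : prime_type M Lam P -> prime_type M Lam Q ->
  sensible P Q -> teq Q (successor P).
Proof.
  intros HP HQ (Hpos & Hneg & _). split; intros f; simpl; split; auto; intros H.
  - apply NNPP. intros Hf. apply (prime_neg_iff P HP) in Hf; [|exact (prime_pos_inL Q HQ _ H)].
    exact (prime_disjoint Q HQ f H (Hneg f Hf)).
  - apply (prime_neg_iff P HP); [exact (prime_neg_inL Q HQ _ H)|]. intros Hf.
    exact (prime_disjoint Q HQ f (Hpos f Hf) H).
Qed.

(** * Lindenbaum lemma *)

Lemma derives_cut A B p : (forall x, A x -> inL M x) -> (forall x, B x -> inL M x) -> inL M p ->
  derives Lam (add_form A p) B -> derives Lam A (add_form B p) -> derives Lam A B.
Proof.
  intros WA WB Wp H1 H2.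
  destruct (nd_of_derives _ _ H1) as (G1 & D1 & HG1 & HD1 & N1).
  destruct (nd_of_derives _ _ H2) as (G2 & D2 & HG2 & HD2 & N2).
  set (G := remove form_eq_dec p G1 ++ G2).
  set (D2' := remove form_eq_dec p D2).
  set (D := D1 ++ D2').
  assert (Hremove : forall (C : form -> Prop) l, Forall (add_form C p) l ->
            Forall C (remove form_eq_dec p l)).
  { intros C l Hl. apply Forall_forall. intros x Hx. apply in_remove in Hx as [Hx Hne].
    destruct (proj1 (Forall_forall _ _) Hl x Hx); [contradiction|assumption]. }
  assert (HG : Forall A G) by (apply Forall_app; split; [apply Hremove|]; auto).
  assert (HD : Forall B D) by (apply Forall_app; split; [|apply Hremove]; auto).
  assert (WD : Forall (inL M) D) by (eapply Forall_impl; [|exact HD]; exact WB).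
  apply (derives_of_nd _ _ G D); auto.
  { eapply Forall_impl; [|exact HG]. exact WA. }
  apply (nd_orE _ p (bigOr D2')).
  - apply (nd_bigOr_incl _ D2 (p :: D2')); [|apply incl_cons_remove|].
    + constructor; [exact Wp|]. apply (Forall_impl _ WB), Hremove, HD2.
    + apply (nd_weaken _ _ N2), incl_appr, incl_refl.
  - apply (nd_bigOr_incl _ D1 D WD), (nd_weaken _ _ N1); [apply incl_appl, incl_refl|].
    intros x Hx. apply (incl_cons_remove p) in Hx as [->|Hx]; apply in_or_app; [now right; left|].
    left. now apply in_or_app; left.
  - apply (nd_bigOr_incl _ D2' D WD), nd_hyp_snoc. apply incl_appr, incl_refl.
Qed.

Section Lindenbaum.

Variables A B : form -> Prop.
Hypothesis A_inL : forall x, A x -> inL M x.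
Hypothesis B_inL : forall x, B x -> inL M x.
Hypothesis AB_consistent : ~ derives Lam A B.

Fixpoint stage (n : nat) : ttype :=
  match n with
  | 0 => TT A B
  | S n =>
      let s := stage n in
      let p := enum n in
      let p_negative := derives Lam (add_form (tpos s) p) (tneg s) in
      TT (fun x => tpos s x \/ (x = p /\ inL M p /\ ~ p_negative))
         (fun x => tneg s x \/ (x = p /\ inL M p /\ p_negative))
  end.

Lemma stage_inL n :
  (forall x, tpos (stage n) x -> inL M x) /\ (forall x, tneg (stage n) x -> inL M x).
Proof.
  induction n as [|n [IHpos IHneg]]; simpl; [auto|].
  split; intros x [H|(-> & H & _)]; auto.
Qed.

Lemma stage_mono n m : n <= m ->
  (forall x, tpos (stage n) x -> tpos (stage m) x) /\
  (forall x, tneg (stage n) x -> tneg (stage m) x).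
Proof. induction 1 as [|m _ [IHpos IHneg]]; simpl; auto. Qed.

Lemma stage_consistent n : ~ derives Lam (tpos (stage n)) (tneg (stage n)).
Proof.
  induction n as [|n IH]; simpl; [exact AB_consistent|].
  destruct (stage_inL n) as [Wpos Wneg].
  set (s := stage n) in *. set (p := enum n).
  intros Hder. destruct (classic (derives Lam (add_form (tpos s) p) (tneg s))) as [Hp|Hp].
  - apply IH. destruct (classic (inL M p)) as [Wp|Wp].
    + apply (derives_cut _ _ p Wpos Wneg Wp Hp).
      revert Hder. apply derives_mono; unfold add_form; [tauto|intros x; tauto].
    + revert Hder. apply derives_mono; [tauto|intros x [H|(-> & H & _)]; tauto].
  - apply Hp. revert Hder. apply derives_mono; unfold add_form; [intros x; tauto|tauto].
Qed.

Lemma lindenbaum : exists T, prime_type M Lam T /\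
  (forall x, A x -> tpos T x) /\ (forall x, B x -> tneg T x).
Proof.
  exists (TT (fun x => exists n, tpos (stage n) x) (fun x => exists n, tneg (stage n) x)).
  split; [split; [|split; [|split]]|split]; simpl.
  - intros x [n H]. exact (proj1 (stage_inL n) x H).
  - intros x [n H]. exact (proj2 (stage_inL n) x H).
  - intros f Wf. pose proof (enum_enc f) as Hf.
    destruct (classic (derives Lam (add_form (tpos (stage (enc f))) f) (tneg (stage (enc f)))))
      as [Hp|Hp]; [right|left]; exists (S (enc f)); simpl; rewrite Hf; auto.
  - intros (G & D & HG & HD & HL).
    apply (proj2 (Forall_forall _ _)) in HG, HD.
    destruct (Forall_eventually _ G (fun n m x H => proj1 (stage_mono n m H) x) HG) as [N1 HN1].
    destruct (Forall_eventually _ D (fun n m x H => proj2 (stage_mono n m H) x) HD) as [N2 HN2].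
    apply (stage_consistent (Nat.max N1 N2)). exists G, D. rewrite <- !Forall_forall.
    split; [|split; [|exact HL]]; (eapply Forall_impl; [|eassumption]).
    + apply (stage_mono N1). lia.
    + apply (stage_mono N2). lia.
  - intros x H. now exists 0.
  - intros x H. now exists 0.
Qed.

End Lindenbaum.

(** * Openness *)

Lemma Lam_next_bigAnd l x : Forall (inL M) l -> In x l -> Lam (Imp (Next (bigAnd l)) (Next x)).
Proof.
  intros Hl Hx. apply Lam_next_mono, Lam_of_nd; [now apply inL_bigAnd|].
  apply (nd_bigAnd_elim _ _ _ Hx), nd_hyp. now left.
Qed.

Lemma Lam_bigOr_next l : Forall (inL M) l -> Lam (Imp (bigOr (map Next l)) (Next (bigOr l))).
Proof.
  intros Hl. apply Lam_of_nd; [apply inL_bigOr, Forall_map, Hl|].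
  apply (nd_bigOr_elim _ (map Next l)); [apply inL_bigOr, Hl| |now apply nd_hyp; left].
  apply Forall_forall. intros y Hy. apply in_map_iff in Hy as (x & <- & Hx).
  apply (nd_mp _ (Next x)); [|apply nd_hyp_snoc].
  apply Lam_next_mono, Lam_of_nd; [exact (proj1 (Forall_forall _ _) Hl x Hx)|].
  apply (nd_bigOr_intro _ l x Hl Hx), nd_hyp. now left.
Qed.

Section Open.

Hypothesis next_imp_axiom : forall p q, inL M p -> inL M q ->
  Lam (Imp (Imp (Next p) (Next q)) (Next (Imp p q))).

Lemma open_consistent P Q : prime_type M Lam P -> prime_type M Lam Q ->
  tle (successor P) Q ->
  ~ derives Lam (fun x => tpos P x \/ exists g, x = Next g /\ tpos Q g)
                (fun x => exists d, x = Next d /\ tneg Q d).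
Proof.
  intros HP HQ [Hle _] Hder.
  destruct (nd_of_derives _ _ Hder) as (G & D & HG & HD & H).
  destruct (Forall_or_map_split _ _ Next G HG) as (G1 & G2 & HG1 & HG2 & HGincl).
  destruct (Forall_map_split _ Next D HD) as (D2 & HD2 & ->).
  assert (WG2 : Forall (inL M) G2) by (eapply Forall_impl; [|exact HG2]; exact (prime_pos_inL Q HQ)).
  assert (WD2 : Forall (inL M) D2) by (eapply Forall_impl; [|exact HD2]; exact (prime_neg_inL Q HQ)).
  set (g := bigAnd G2). set (d := bigOr D2).
  assert (Hgd : ND (G1 ++ [Next g]) (Next d)).
  { apply (nd_mp _ _ _ (Lam_bigOr_next D2 WD2)), (nd_subst _ _ H), Forall_forall.
    intros x Hx. apply HGincl, in_app_or in Hx as [Hx|Hx].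
    - apply nd_hyp, in_or_app. now left.
    - apply in_map_iff in Hx as (y & <- & Hy).
      apply (nd_mp _ _ _ (Lam_next_bigAnd G2 y WG2 Hy)), nd_hyp_snoc. }
  assert (Himp : tpos Q (Imp g d)).
  { apply Hle, (prime_imp P HP _ _ (next_imp_axiom g d (inL_bigAnd _ _ WG2) (inL_bigOr _ _ WD2))).
    apply (prime_closed P HP G1 _ HG1), nd_impI; [exact (inL_bigAnd _ _ WG2)|exact Hgd]. }
  assert (Hg : tpos Q g).
  { apply (prime_closed Q HQ G2 _ HG2), nd_bigAnd_intro, Forall_forall. intros. now apply nd_hyp. }
  apply (prime_consistent Q HQ [g; Imp g d] D2); [repeat constructor; assumption|exact HD2|].
  apply (nd_impE _ g); apply nd_hyp; simpl; auto.
Qed.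

Lemma successor_open P Q : prime_type M Lam P -> prime_type M Lam Q ->
  tle (successor P) Q -> exists T, prime_type M Lam T /\ tle P T /\ sensible T Q.
Proof.
  intros HP HQ Hle.
  destruct (lindenbaum (fun x => tpos P x \/ exists g, x = Next g /\ tpos Q g)
                       (fun x => exists d, x = Next d /\ tneg Q d)) as (T & HT & HPT & HQT).
  - intros x [Hx|(g & -> & Hg)]; [exact (prime_pos_inL P HP _ Hx)|exact (prime_pos_inL Q HQ _ Hg)].
  - intros x (d & -> & Hd). exact (prime_neg_inL Q HQ _ Hd).
  - now apply open_consistent.
  - exists T. split; [exact HT|split].
    + split; [auto|]. intros f Hf. apply (prime_neg_iff P HP); [exact (prime_neg_inL T HT _ Hf)|].
      intros Hpos. exact (prime_disjoint T HT f (HPT f (or_introl Hpos)) Hf).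
    + apply sensible_of_next_iff; auto. intros f Wf. split; intros H.
      * apply NNPP. intros Hf. apply (prime_neg_iff Q HQ _ Wf) in Hf.
        exact (prime_disjoint T HT _ H (HQT _ (ex_intro _ f (conj eq_refl Hf)))).
      * apply HPT. right. now exists f.
Qed.

End Open.

End Admissible.

Theorem lemma5p5 (M : modalities) (Lam : form -> Prop) :
  admissible M Lam ->
  (* S_c is a function W_c -> W_c *)
  (forall P, prime_type M Lam P ->
     exists Q, prime_type M Lam Q /\ sensible P Q /\
       (forall Q', prime_type M Lam Q' -> sensible P Q' -> teq Q' Q)) /\
  (* S_c is monotone *)
  (forall P Q P' Q', prime_type M Lam P -> prime_type M Lam Q ->
     prime_type M Lam P' -> prime_type M Lam Q' ->
     tle P Q -> sensible P P' -> sensible Q Q' -> tle P' Q') /\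
  (* S_c is open, under the extra axiom *)
  ((forall p q, inL M p -> inL M q ->
      Lam (Imp (Imp (Next p) (Next q)) (Next (Imp p q)))) ->
   forall P P' Q, prime_type M Lam P -> prime_type M Lam P' ->
     prime_type M Lam Q -> sensible P P' -> tle P' Q ->
     exists T, prime_type M Lam T /\ tle P T /\ sensible T Q).
Proof.
  intros HA. split; [|split].
  - intros P HP. exists (successor P).
    split; [|split]; eauto using successor_prime, successor_sensible, sensible_successor_eq.
  - intros P Q P' Q' HP HQ HP' HQ' Hle HPP' HQQ'.
    apply (tle_trans _ (successor P)); [apply tle_of_teq; now apply (sensible_successor_eq M Lam)|].
    apply (tle_trans _ (successor Q)); [now apply successor_mono|].
    apply tle_of_teq, teq_sym. now apply (sensible_successor_eq M Lam).
  - intros Hax P P' Q HP HP' HQ HPP' Hle. apply (successor_open M Lam HA Hax); auto.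
    apply (tle_trans _ P'); [apply tle_of_teq, teq_sym|exact Hle].
    now apply (sensible_successor_eq M Lam).
Qed.
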